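(* The operators $L_1$ and $L_2$ commute: $L_1L_2=L_2L_1$ on the space of polynomials in $x,y$.
   Context: $R_x f(x,y)=f(-x,y)$, $R_yf(x,y)=f(x,-y)$, $\mathbb I$ the identity, compositions act right-to-left, coefficients act by multiplication; $\alpha,\beta,\gamma,\delta$ are real parameters with $\delta\neq\pm1$. $$L_1=G_5R_xR_y\partial_y+G_6R_y\partial_y+G_7R_xR_y\partial_x+G_8R_x\partial_x+G_1R_xR_y+G_2R_x+G_3R_y-(G_1+G_2+G_3)\,\mathbb I,$$ with $G_1=\frac{x[1+\beta+\gamma-y(\alpha+\beta+\gamma+2)]-\delta[y(\alpha+\gamma+1)-\gamma]}{4xy}$, $G_2=-\frac{x[x(\beta+\gamma+1)-\beta y]+\delta(y+\gamma x)}{4x^2y}$, $G_3=-\delta\,\frac{x+\alpha xy-y[y(\alpha+\gamma+1)-\gamma]}{4xy^2}$, $G_5=\frac{(\delta+x)(y-1)}{2x}$, $G_6=\frac{\delta(x-y)(y-1)}{2xy}$, $G_7=\frac{(\delta+x)(y-1)}{2y}$, $G_8=\frac{(\delta+x)(x-y)}{2xy}$; and $$L_2=\frac{2(y-x)(x+\delta)}{x}R_x\partial_x+\frac{(\gamma+\beta+1)x^2+(\delta\gamma-\beta y)x+\delta y}{x^2}\,(R_x-\mathbb I).$$ *)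

From Stdlib Require Import Reals ClassicalEpsilon.
Open Scope R_scope.

Definition bipoly (c : nat -> nat -> R) (N : nat) : R -> R -> R :=
  fun x y => sum_f_R0 (fun i => sum_f_R0 (fun j => c i j * x ^ i * y ^ j) N) N.

(* Partial derivatives (the derivative when it exists; chosen by epsilon). *)
Definition Dx (f : R -> R -> R) : R -> R -> R :=
  fun x y => epsilon (inhabits 0) (fun l => derivable_pt_lim (fun t => f t y) x l).
Definition Dy (f : R -> R -> R) : R -> R -> R :=
  fun x y => epsilon (inhabits 0) (fun l => derivable_pt_lim (fun t => f x t) y l).

Section Ops.
Variables (al be ga de : R).

Definition G1 x y := (x * (1 + be + ga - y * (al + be + ga + 2)) - de * (y * (al + ga + 1) - ga)) / (4 * x * y).
Definition G2 x y := - (x * (x * (be + ga + 1) - be * y) + de * (y + ga * x)) / (4 * x ^ 2 * y).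
Definition G3 x y := - de * (x + al * x * y - y * (y * (al + ga + 1) - ga)) / (4 * x * y ^ 2).
Definition G5 x y := (de + x) * (y - 1) / (2 * x).
Definition G6 x y := de * (x - y) * (y - 1) / (2 * x * y).
Definition G7 x y := (de + x) * (y - 1) / (2 * y).
Definition G8 x y := (de + x) * (x - y) / (2 * x * y).

(* R_x R_y d_y f = (x,y) |-> (d_y f)(-x,-y), etc. *)
Definition L1 (f : R -> R -> R) : R -> R -> R := fun x y =>
  G5 x y * Dy f (-x) (-y) + G6 x y * Dy f x (-y)
  + G7 x y * Dx f (-x) (-y) + G8 x y * Dx f (-x) y
  + G1 x y * f (-x) (-y) + G2 x y * f (-x) y + G3 x y * f x (-y)
  - (G1 x y + G2 x y + G3 x y) * f x y.

Definition L2 (f : R -> R -> R) : R -> R -> R := fun x y =>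
  2 * (y - x) * (x + de) / x * Dx f (-x) y
  + ((ga + be + 1) * x ^ 2 + (de * ga - be * y) * x + de * y) / x ^ 2 * (f (-x) y - f x y).

End Ops.

From Pilot Require Import Defs.
From Stdlib Require Import Reals Lra ClassicalEpsilon FunctionalExtensionality.
From Coquelicot Require Import Coquelicot.
Open Scope R_scope.

(* Both composites L1 L2 f and L2 L1 f, evaluated at (x, y), only involve the
   values of f, f_x, f_y, f_xx and f_xy at the four points (±x, ±y), with
   rational coefficients in x and y; f_yy never occurs.  Once the mixed partials
   f_xy and f_yx are identified, the difference of the two composites vanishes
   as an identity of rational functions.  Hence the operators commute on every
   function with this second-order regularity, polynomials in particular. *)

Lemma Dx_is_derive (f : R -> R -> R) (a b l : R) :
  is_derive (fun t => f t b) a l -> Defs.Dx f a b = l.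
Proof.
  intro H; apply is_derive_Reals in H; unfold Defs.Dx.
  apply (uniqueness_limite (fun t => f t b) a); auto.
  apply (epsilon_spec (inhabits 0) (fun l => derivable_pt_lim (fun t => f t b) a l)).
  now exists l.
Qed.

Lemma Dy_is_derive (f : R -> R -> R) (a b l : R) :
  is_derive (fun t => f a t) b l -> Defs.Dy f a b = l.
Proof.
  intro H; apply is_derive_Reals in H; unfold Defs.Dy.
  apply (uniqueness_limite (fun t => f a t) b); auto.
  apply (epsilon_spec (inhabits 0) (fun l => derivable_pt_lim (fun t => f a t) b l)).
  now exists l.
Qed.

Section SecondOrderPartials.

Variables f fx fy fxx fxy : R -> R -> R.
Hypothesis f_dx : forall a b, is_derive (fun t => f t b) a (fx a b).
Hypothesis f_dy : forall a b, is_derive (fun t => f a t) b (fy a b).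
Hypothesis fx_dx : forall a b, is_derive (fun t => fx t b) a (fxx a b).
Hypothesis fx_dy : forall a b, is_derive (fun t => fx a t) b (fxy a b).
Hypothesis fy_dx : forall a b, is_derive (fun t => fy t b) a (fxy a b).

Lemma Dx_eq : Defs.Dx f = fx.
Proof.
  apply functional_extensionality; intro a; apply functional_extensionality; intro b.
  exact (Dx_is_derive _ _ _ _ (f_dx a b)).
Qed.

Lemma Dy_eq : Defs.Dy f = fy.
Proof.
  apply functional_extensionality; intro a; apply functional_extensionality; intro b.
  exact (Dy_is_derive _ _ _ _ (f_dy a b)).
Qed.

Lemma Derive_f_x a b : Derive (fun t => f t b) a = fx a b.
Proof. exact (is_derive_unique _ _ _ (f_dx a b)). Qed.

Lemma Derive_f_y a b : Derive (fun t => f a t) b = fy a b.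
Proof. exact (is_derive_unique _ _ _ (f_dy a b)). Qed.

Lemma Derive_fx_x a b : Derive (fun t => fx t b) a = fxx a b.
Proof. exact (is_derive_unique _ _ _ (fx_dx a b)). Qed.

Lemma Derive_fx_y a b : Derive (fun t => fx a t) b = fxy a b.
Proof. exact (is_derive_unique _ _ _ (fx_dy a b)). Qed.

Lemma Derive_fy_x a b : Derive (fun t => fy t b) a = fxy a b.
Proof. exact (is_derive_unique _ _ _ (fy_dx a b)). Qed.

Ltac nonzero :=
  repeat first [ apply Rmult_integral_contrapositive_currified
               | apply Ropp_neq_0_compat | apply pow_nonzero ];
  first [ assumption | lra ].

(* Solves [is_derive g a ?l] for [g] an explicit expression in f, fx, fy,
   instantiating [?l] with the derivative in terms of the partials. *)
Ltac derive_partials :=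
  auto_derive;
  [ repeat match goal with |- _ /\ _ => split end;
    match goal with
    | |- ex_derive (fun t => f t ?b) ?a => exact (ex_intro _ _ (f_dx a b))
    | |- ex_derive (fun t => f ?a t) ?b => exact (ex_intro _ _ (f_dy a b))
    | |- ex_derive (fun t => fx t ?b) ?a => exact (ex_intro _ _ (fx_dx a b))
    | |- ex_derive (fun t => fx ?a t) ?b => exact (ex_intro _ _ (fx_dy a b))
    | |- ex_derive (fun t => fy t ?b) ?a => exact (ex_intro _ _ (fy_dx a b))
    | |- True => exact I
    | |- _ <> 0 => nonzero
    end
  | rewrite ?Derive_f_x, ?Derive_f_y, ?Derive_fx_x, ?Derive_fx_y, ?Derive_fy_x;
    reflexivity ].

Lemma L1_L2_commute al be ga de a b : a <> 0 -> b <> 0 ->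
  L1 al be ga de (L2 be ga de f) a b = L2 be ga de (L1 al be ga de f) a b.
Proof.
  intros ha hb.
  unfold L1 at 1.
  erewrite (Dy_is_derive (L2 be ga de f) (-a) (-b))
    by (unfold L2; rewrite Dx_eq; derive_partials).
  erewrite (Dy_is_derive (L2 be ga de f) a (-b))
    by (unfold L2; rewrite Dx_eq; derive_partials).
  erewrite (Dx_is_derive (L2 be ga de f) (-a) (-b))
    by (unfold L2; rewrite Dx_eq; derive_partials).
  erewrite (Dx_is_derive (L2 be ga de f) (-a) b)
    by (unfold L2; rewrite Dx_eq; derive_partials).
  unfold L2.
  erewrite (Dx_is_derive (L1 al be ga de f) (-a) b)
    by (unfold L1, G1, G2, G3, G5, G6, G7, G8; rewrite Dx_eq, Dy_eq; derive_partials).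
  unfold L1, G1, G2, G3, G5, G6, G7, G8; rewrite Dx_eq, Dy_eq, !Ropp_involutive.
  field; split; assumption.
Qed.

End SecondOrderPartials.

Lemma is_derive_sum_f_R0 (g : nat -> R -> R) (g' : nat -> R) n a :
  (forall k, is_derive (g k) a (g' k)) ->
  is_derive (fun t => sum_f_R0 (fun k => g k t) n) a (sum_f_R0 g' n).
Proof.
  intro H.
  apply (is_derive_ext (fun t => sum_n (fun k => g k t) n)).
  { intro t; apply sum_n_Reals. }
  rewrite <- sum_n_Reals; apply (is_derive_sum_n (V := R_NormedModule)); auto.
Qed.

(* With [p i x = x ^ i] and [q j y = y ^ j] this is [bipoly c N]; the family is
   closed under partial differentiation, which supplies all the partials needed. *)
Definition bisum (c : nat -> nat -> R) (N : nat) (p q : nat -> R -> R) (x y : R) : R :=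
  sum_f_R0 (fun i => sum_f_R0 (fun j => c i j * p i x * q j y) N) N.

Lemma is_derive_bisum_x c N (p p' q : nat -> R -> R) a b :
  (forall i t, is_derive (p i) t (p' i t)) ->
  is_derive (fun t => bisum c N p q t b) a (bisum c N p' q a b).
Proof.
  intro Hp; unfold bisum.
  apply (is_derive_sum_f_R0 (fun i t => sum_f_R0 (fun j => c i j * p i t * q j b) N)).
  intro i; apply (is_derive_sum_f_R0 (fun j t => c i j * p i t * q j b)); intro j.
  auto_derive; [exact (ex_intro _ _ (Hp i a)) |].
  erewrite is_derive_unique by apply Hp; ring.
Qed.

Lemma is_derive_bisum_y c N (p q q' : nat -> R -> R) a b :
  (forall j t, is_derive (q j) t (q' j t)) ->
  is_derive (fun t => bisum c N p q a t) b (bisum c N p q' a b).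
Proof.
  intro Hq; unfold bisum.
  apply (is_derive_sum_f_R0 (fun i t => sum_f_R0 (fun j => c i j * p i a * q j t) N)).
  intro i; apply (is_derive_sum_f_R0 (fun j t => c i j * p i a * q j t)); intro j.
  auto_derive; [exact (ex_intro _ _ (Hq j b)) |].
  erewrite is_derive_unique by apply Hq; ring.
Qed.

Definition pow_deriv (n : nat) (t : R) : R := INR n * t ^ pred n.

Lemma is_derive_monomial n t : is_derive (fun u => u ^ n) t (pow_deriv n t).
Proof. unfold pow_deriv; auto_derive; [exact I | ring]. Qed.

Lemma is_derive_pow_deriv n t :
  is_derive (pow_deriv n) t (INR n * pow_deriv (pred n) t).
Proof. unfold pow_deriv; auto_derive; [exact I | ring]. Qed.

Theorem mainTheorem6 (al be ga de : R) (hd1 : de <> 1) (hd2 : de <> -1)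
  (c : nat -> nat -> R) (N : nat) (x y : R) (hx : x <> 0) (hy : y <> 0) :
  L1 al be ga de (L2 be ga de (bipoly c N)) x y
  = L2 be ga de (L1 al be ga de (bipoly c N)) x y.
Proof.
  change (bipoly c N) with (bisum c N (fun n t => t ^ n) (fun n t => t ^ n)).
  apply (L1_L2_commute _
           (bisum c N pow_deriv (fun n t => t ^ n))
           (bisum c N (fun n t => t ^ n) pow_deriv)
           (bisum c N (fun n t => INR n * pow_deriv (pred n) t) (fun n t => t ^ n))
           (bisum c N pow_deriv pow_deriv)); trivial; intros a b.
  - apply is_derive_bisum_x; intros; apply is_derive_monomial.
  - apply is_derive_bisum_y; intros; apply is_derive_monomial.
  - apply is_derive_bisum_x; intros; apply is_derive_pow_deriv.
  - apply is_derive_bisum_y; intros; apply is_derive_monomial.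
  - apply is_derive_bisum_x; intros; apply is_derive_monomial.
Qed.
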